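(* Let $(X,Y,Z)$ be jointly distributed with $X\in\mathcal X$, $Y\in\mathcal Y$ (a finite set of classes, indexed so that ''smallest index'' is meaningful) and $Z\in\{0,1\}^K$, with $\Pr(Z_k=1)>0$ for all $k\in[K]$. Let $\mathbb P_X$ be the marginal of $X$. Let $r:\mathcal X\times\mathcal Y\to[0,\infty)$ be a pointwise risk, and let $g(x,k)=\Pr(Z_k=1\mid X=x)$. Let $\mathcal C=\{(y_1,\mathcal I_1),\dots,(y_C,\mathcal I_C)\}$ be fairness constraints and $\alpha\in[0,1]$. Assume the uniqueness assumption holds for $(r,g)$ under $\mathbb P_X$. Let $\{\psi_{c,k}:c\in[C],k\in\mathcal I_c\}$ be (the $\psi$-part of) a maximizer of the Dual LP$(r,g,\mathbb P_X,\mathcal C,\alpha)$. Then the classifier $$h(x)=\operatorname*{argmin}_{y\in\mathcal Y}\Big(r(x,y)+\sum_{k\in[K]}g(x,k)w(y,k)\Big),\qquad w(y,k)=-\sum_{c\in[C]}\mathbf 1[y_c=y,\,k\in\mathcal I_c]\frac{\psi_{c,k}}{\Pr(Z_k=1)},$$ (ties broken to the minimizing class with the smallest index) is a minimizer of $$\min_{h:\mathcal X\to\mathcal Y}\mathbb E[r(X,h(X))]\quad\text{subject to } h \text{ satisfying } \alpha\text{-group fairness w.r.t. } \mathcal C,$$ where the minimum is over (possibly randomized) classifiers.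
   Context: Fairness constraints: $\mathcal C=\{(y_c,\mathcal I_c)\}_{c\in[C]}$ with $y_c\in\mathcal Y$ and $\mathcal I_c\subseteq[K]$. A (randomized) classifier $h:\mathcal X\to\mathcal Y$ satisfies $\alpha$-group fairness w.r.t. $\mathcal C$ if $\max_{k,k'\in\mathcal I_c}|\Pr(h(X)=y_c\mid Z_k=1)-\Pr(h(X)=y_c\mid Z_{k'}=1)|\le\alpha$ for all $c\in[C]$ (the randomness of $h$ given $X$ is independent of $(Y,Z)$). Dual LP$(r,g,P,\mathcal C,\alpha)$ for a distribution $P$ on $\mathcal X$: maximize over $\phi:\mathcal X\to\mathbb R$ and reals $\psi=\{\psi_{c,k}:c\in[C],k\in\mathcal I_c\}$ the objective $\mathbb E_{X\sim P}[\phi(X)]-\frac\alpha2\sum_{c\in[C]}\sum_{k\in\mathcal I_c}|\psi_{c,k}|$ subject to $\phi(x)+\sum_{c:y_c=y}\sum_{k\in\mathcal I_c}g(x,k)\frac{\psi_{c,k}}{\mathbb E_{X\sim P}[g(X,k)]}\le r(x,y)$ for all $x\in\mathcal X,y\in\mathcal Y$, and $\sum_{k\in\mathcal I_c}\psi_{c,k}=0$ for all $c$. (For the Bayes $g$ and $P=\mathbb P_X$, $\mathbb E_P[g(X,k)]=\Pr(Z_k=1)$.) Uniqueness assumption for $(r,g)$ under $P$: for every $w:\mathcal Y\times[K]\to\mathbb R$, the set $\operatorname{argmin}_{y\in\mathcal Y}\big(r(X,y)-\sum_k g(X,k)w(y,k)\big)$ has exactly one element for $P$-almost every $X$. *)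

From HB Require Import structures.
From mathcomp Require Import all_boot all_order all_algebra.
From mathcomp Require Import all_classical all_reals all_analysis.
Set Implicit Arguments. Unset Strict Implicit. Unset Printing Implicit Defensive.
Import Order.TTheory GRing.Theory Num.Theory.
Local Open Scope classical_set_scope.
Local Open Scope ring_scope.

(* The classifier's randomness is
   independent of (Y,Z) given X, so Pr(h(X)=y, Z_k=1) = E[q(X,y) 1{Z_k=1}]. *)
Definition rand_classifier d (TX : measurableType d) (R : realType) (n : nat)
  (q : TX -> 'I_n.+1 -> R) : Prop :=
  [/\ forall x y, 0 <= q x y,
      forall x, \sum_(y < n.+1) q x y = 1
    & forall y, measurable_fun setT (fun x => q x y)].

Definition det_classifier d (TX : measurableType d) (R : realType) (n : nat)
  (h : TX -> 'I_n.+1) : TX -> 'I_n.+1 -> R :=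
  fun x y => if h x == y then 1 else 0.

(* Pr(h(X) = y | Z_k = 1), events E k = {Z_k = 1} *)
Definition cond_pred dO d (Om : measurableType dO) (TX : measurableType d)
  (R : realType) (P : probability Om R) (X : Om -> TX) (K n : nat)
  (E : 'I_K -> set Om) (q : TX -> 'I_n.+1 -> R) (y : 'I_n.+1) (k : 'I_K) : R :=
  fine (\int[P]_(w in E k) (q (X w) y)%:E) / fine (P (E k)).

Definition group_fair dO d (Om : measurableType dO) (TX : measurableType d)
  (R : realType) (P : probability Om R) (X : Om -> TX) (K n C : nat)
  (E : 'I_K -> set Om) (yc : 'I_C -> 'I_n.+1) (Ic : 'I_C -> {set 'I_K})
  (alpha : R) (q : TX -> 'I_n.+1 -> R) : Prop :=
  forall c k k', k \in Ic c -> k' \in Ic c ->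
    `| cond_pred P X E q (yc c) k - cond_pred P X E q (yc c) k' | <= alpha.

Definition risk dO d (Om : measurableType dO) (TX : measurableType d)
  (R : realType) (P : probability Om R) (X : Om -> TX) (n : nat)
  (r : TX -> 'I_n.+1 -> R) (q : TX -> 'I_n.+1 -> R) : \bar R :=
  \int[P]_w (\sum_(y < n.+1) q (X w) y * r (X w) y)%:E.

Definition expect d (TX : measurableType d) (R : realType)
  (mu : probability TX R) (f : TX -> R) : R := fine (\int[mu]_x (f x)%:E).

Definition dual_feasible d (TX : measurableType d) (R : realType)
  (n K C : nat) (r : TX -> 'I_n.+1 -> R) (g : TX -> 'I_K -> R)
  (mu : probability TX R) (yc : 'I_C -> 'I_n.+1) (Ic : 'I_C -> {set 'I_K})
  (phi : TX -> R) (psi : 'I_C -> 'I_K -> R) : Prop :=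
  [/\ mu.-integrable setT (fun x => (phi x)%:E),
      forall x y, phi x + \sum_(c < C | yc c == y) \sum_(k in Ic c)
          g x k * psi c k / expect mu (fun x' => g x' k) <= r x y
    & forall c, \sum_(k in Ic c) psi c k = 0].

Definition dual_obj d (TX : measurableType d) (R : realType) (K C : nat)
  (mu : probability TX R) (Ic : 'I_C -> {set 'I_K}) (alpha : R)
  (phi : TX -> R) (psi : 'I_C -> 'I_K -> R) : R :=
  expect mu phi - alpha / 2 * \sum_(c < C) \sum_(k in Ic c) `|psi c k|.

Definition dual_maximizer d (TX : measurableType d) (R : realType)
  (n K C : nat) (r : TX -> 'I_n.+1 -> R) (g : TX -> 'I_K -> R)
  (mu : probability TX R) (yc : 'I_C -> 'I_n.+1) (Ic : 'I_C -> {set 'I_K})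
  (alpha : R) (phi : TX -> R) (psi : 'I_C -> 'I_K -> R) : Prop :=
  dual_feasible r g mu yc Ic phi psi /\
  forall phi' psi', dual_feasible r g mu yc Ic phi' psi' ->
    dual_obj mu Ic alpha phi' psi' <= dual_obj mu Ic alpha phi psi.

Definition argmin_first (R : realType) (n : nat) (f : 'I_n.+1 -> R) : 'I_n.+1 :=
  head ord0 [seq y <- enum 'I_n.+1 | [forall y', f y <= f y']].

Definition is_argmin (R : realType) (n : nat) (f : 'I_n.+1 -> R) (y : 'I_n.+1) : Prop :=
  forall y', f y <= f y'.

Definition uniqueness_assumption d (TX : measurableType d) (R : realType)
  (n K : nat) (r : TX -> 'I_n.+1 -> R) (g : TX -> 'I_K -> R)
  (mu : probability TX R) : Prop :=
  forall w : 'I_n.+1 -> 'I_K -> R,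
    {ae mu, forall x, exists! y,
        is_argmin (fun y' => r x y' - \sum_(k < K) g x k * w y' k) y}.

Definition is_cond_prob dO d (Om : measurableType dO) (TX : measurableType d)
  (R : realType) (P : probability Om R) (X : Om -> TX) (K : nat)
  (E : 'I_K -> set Om) (g : TX -> 'I_K -> R) : Prop :=
  forall k, measurable_fun setT (fun x => g x k) /\
    forall A, measurable A ->
      (\int[P]_(w in X @^-1` A) (g (X w) k)%:E = P (X @^-1` A `&` E k))%E.

(** Let [L x y := r x y - lagrange_term psi x y] be the Lagrangian of the
    optimal dual pair [(phi, psi)]; [h] minimises [L x], and optimality of [phi]
    forces [phi = min_y L x y] almost everywhere.

    Weak duality: for an alpha-fair randomised classifier [q], since each row of
    [psi] sums to zero, [E r(X, q) >= E phi + sum psi_ck Pr(q = y_c | Z_k = 1)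
    >= E phi - alpha / 2 * sum |psi_ck|].

    Moving [psi] in a direction [de] with zero row sums and re-minimising [L]
    gives feasible dual pairs.  As the minimiser of [L x] is a.e. unique, the
    minimiser does not move for small steps, and dominated convergence
    identifies the one-sided derivative of the dual objective as
    [- sum de_ck Pr(h = y_c | Z_k = 1)] minus [alpha / 2] times that of the
    l1 norm; optimality makes it nonpositive.  The directions [e_k - e_k'] give
    alpha-fairness of [h], and the direction [- psi] gives
    [E r(X, h X) <= E phi - alpha / 2 * sum |psi_ck|], the dual value. *)

From HB Require Import structures.
From mathcomp Require Import all_boot all_order all_algebra.
From mathcomp Require Import all_classical all_reals all_analysis.
From mathcomp Require Import measurable_realfun ring lra.
Import Order.TTheory GRing.Theory Num.Theory numFieldNormedType.Exports.
Local Open Scope classical_set_scope.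
Local Open Scope ring_scope.

Section argmin_first.
Context {R : realType} {n : nat}.
Implicit Types (f s : 'I_n.+1 -> R) (y : 'I_n.+1).

Definition is_argminb f y : bool := [forall y', f y <= f y'].

Lemma has_argminb f : has (is_argminb f) (enum 'I_n.+1).
Proof.
have [y _ ymin] := @arg_minP _ _ _ ord0 predT f isT.
by apply/hasP; exists y; rewrite ?mem_enum //; apply/forallP => y'; exact: ymin.
Qed.

Lemma argmin_first_find f :
  argmin_first f = nth ord0 (enum 'I_n.+1) (find (is_argminb f) (enum 'I_n.+1)).
Proof.
rewrite /argmin_first /is_argminb.
by elim: (enum _) => //= a s IH; case: ifP.
Qed.

Lemma argmin_firstP f : is_argmin f (argmin_first f).
Proof.
by move=> y; rewrite argmin_first_find; have /forallP := nth_find ord0 (has_argminb f).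
Qed.

Lemma argmin_first_strict f y0 : (forall y, y != y0 -> f y0 < f y) ->
  argmin_first f = y0.
Proof.
move=> y0_lt; apply/eqP/negP => /negP/y0_lt.
by rewrite ltNge argmin_firstP.
Qed.

Lemma unique_argmin_strict {f y0} : is_argmin f y0 ->
  (forall y, is_argmin f y -> y0 = y) -> forall y, y != y0 -> f y0 < f y.
Proof.
move=> y0min y0_uniq y /eqP yNy0; rewrite lt_neqAle y0min andbT.
apply/eqP => fy0y; apply/yNy0/esym/y0_uniq => y'; rewrite -fy0y; exact: y0min.
Qed.

Lemma argmin_first_eq f y : (argmin_first f == y) =
  is_argminb f y && [forall y' : 'I_n.+1, (y' < y)%N ==> ~~ is_argminb f y'].
Proof.
have has_min := has_argminb f.
have lt_find : (find (is_argminb f) (enum 'I_n.+1) < n.+1)%N.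
  by rewrite -[X in (_ < X)%N](size_enum_ord n.+1) -has_find.
pose i := Ordinal lt_find.
have -> : argmin_first f = i.
  by apply: ord_inj; rewrite argmin_first_find nth_enum_ord.
have i_min : is_argminb f i.
  by have := nth_find ord0 has_min; rewrite -[X in nth _ _ X]/(nat_of_ord i) nth_ord_enum.
have before y' : (y' < i)%N -> ~~ is_argminb f y'.
  by move=> /(before_find ord0); rewrite nth_ord_enum => ->.
clearbody i.
apply/eqP/andP => [<- | [ymin /forallP ybefore]].
  by split => //; apply/forallP => y'; apply/implyP/before.
apply/ord_inj/anti_leq/andP; split; rewrite leqNgt; apply/negP => lt.
- by move: (before y lt); rewrite ymin.
- by move: (ybefore i); rewrite lt i_min.
Qed.

Lemma near0_argmin_first_perturb {f y0} s : (forall y, y != y0 -> f y0 < f y) ->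
  \forall t \near (0 : R), argmin_first (fun y => f y - t * s y) = y0.
Proof.
move=> y0_lt.
have small_t y : \forall t \near (0 : R), y != y0 -> t * (s y - s y0) < f y - f y0.
  have [->|/y0_lt gap] := eqVneq y y0; first by near=> t.
  rewrite -subr_gt0 in gap.
  have c_gt0 : 0 < `|s y - s y0| + 1 by rewrite ltr_wpDl.
  apply: filterS (nbhs0_lt (divr_gt0 gap c_gt0)) => t + _.
  rewrite ltr_pdivlMr // => t_small; apply: le_lt_trans t_small.
  by rewrite (le_trans (ler_norm _)) // normrM ler_wpM2l // lerDl.
apply: filterS (filter_forall _ small_t) => t small; apply: argmin_first_strict.
by move=> y /small; lra.
Unshelve. all: by end_near.
Qed.

End argmin_first.

Lemma forall_all_enum (T : finType) (p : pred T) : [forall i, p i] = all p (enum T).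
Proof. by apply/forallP/allP => p_all i //; apply: p_all; rewrite mem_enum. Qed.

Lemma sum_det_classifierM {d} {T : measurableType d} {R : realType} {n : nat}
    (h : T -> 'I_n.+1) x (G : 'I_n.+1 -> R) :
  \sum_(y < n.+1) det_classifier R h x y * G y = G (h x).
Proof.
rewrite (bigD1 (h x)) //= /det_classifier eqxx mul1r big1 ?addr0 // => y.
by rewrite eq_sym => /negbTE ->; rewrite mul0r.
Qed.

Section measurable_argmin_first.
Context d (T : measurableType d) (R : realType) (n : nat).
Variable F : T -> 'I_n.+1 -> R.
Hypothesis mF : forall y, measurable_fun setT (F ^~ y).

Let measurable_fun_all (I : Type) (s : seq I) (B : I -> T -> bool) :
  (forall i, measurable_fun setT (B i)) ->
  measurable_fun setT (fun x => all (B ^~ x) s).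
Proof.
move=> mB; elim: s => [|i s IH] /=; first exact: measurable_cst.
exact: measurable_and.
Qed.

Let measurable_is_argminb y : measurable_fun setT (fun x => is_argminb (F x) y).
Proof.
under eq_fun do rewrite /is_argminb forall_all_enum.
by apply: measurable_fun_all => y'; exact: measurable_fun_ler.
Qed.

Lemma measurable_det_classifier_argmin_first y :
  measurable_fun setT (det_classifier R (fun x => argmin_first (F x)) ^~ y).
Proof.
apply: measurable_fun_ifT => //.
under eq_fun do rewrite argmin_first_eq forall_all_enum.
apply: measurable_and; first exact: measurable_is_argminb.
apply: measurable_fun_all => y'; case: (y' < y)%N; last exact: measurable_cst.
exact/measurable_neg/measurable_is_argminb.
Qed.

Lemma measurable_fun_argmin_first_app (G : T -> 'I_n.+1 -> R) :
  (forall y, measurable_fun setT (G ^~ y)) ->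
  measurable_fun setT (fun x => G x (argmin_first (F x))).
Proof.
move=> mG; under eq_fun => x do
  rewrite -(sum_det_classifierM (fun x => argmin_first (F x)) x).
apply: measurable_sum => y; apply: measurable_funM => //.
exact: measurable_det_classifier_argmin_first.
Qed.

End measurable_argmin_first.

Section Rintegral_lemmas.
Context {d} {T : measurableType d} {R : realType} {mu : {measure set T -> \bar R}}.
Implicit Types f g b : T -> R.
Local Notation integrable f := (mu.-integrable setT (EFin \o f)).

Lemma integrable_sumR (I : Type) (s : seq I) (p : pred I) (f : I -> T -> R) :
  (forall i, integrable (f i)) -> integrable (fun x => \sum_(i <- s | p i) f i x).
Proof.
move=> fi; apply: (eq_integrable measurableT _ _ _
  (integrable_sum measurableT s (P := p) (fun i _ => fi i))) => x _.
by rewrite /= sumEFin.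
Qed.

Lemma Rintegral_sum (I : Type) (s : seq I) (p : pred I) (f : I -> T -> R) :
  (forall i, integrable (f i)) ->
  \int[mu]_x (\sum_(i <- s | p i) f i x) = \sum_(i <- s | p i) \int[mu]_x f i x.
Proof.
move=> fi; rewrite /Rintegral; under eq_integral do rewrite -sumEFin.
rewrite integral_sum //.
by rewrite -sum_fine // => i _; exact: integrable_fin_num (fi i).
Qed.

Lemma integrableZR (a : R) {f} : integrable f -> integrable (fun x => a * f x).
Proof.
move=> fi; apply: (eq_integrable measurableT _ _ _ (integrableZl measurableT a fi)).
move=> x _.
by rewrite /= EFinM.
Qed.

Lemma integrableBR {f g} : integrable f -> integrable g ->
  integrable (fun x => f x - g x).
Proof.
move=> fi gi; apply: (eq_integrable measurableT _ _ _ (integrableB measurableT fi gi)).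
move=> x _.
by rewrite /= EFinB.
Qed.

Lemma integrableDR {f g} : integrable f -> integrable g ->
  integrable (fun x => f x + g x).
Proof.
move=> fi gi; apply: (eq_integrable measurableT _ _ _ (integrableD measurableT fi gi)).
move=> x _.
by rewrite /= EFinD.
Qed.

Lemma integrable_close {f g b} : measurable_fun setT f -> integrable g ->
  integrable b -> (forall x, `|f x - g x| <= b x) -> integrable f.
Proof.
move=> mf gi bi fg_b.
have mfg : measurable_fun setT (fun x => f x - g x).
  by apply: measurable_funB => //; case/integrableP: gi => /measurable_EFinP.
have fgi : integrable (fun x => f x - g x).
  apply: (le_integrable measurableT _ _ bi) => [|x _]; first exact/measurable_EFinP.
  by rewrite /= lee_fin (le_trans (fg_b x)) // ler_norm.
apply: (eq_integrable measurableT _ _ _ (integrableD measurableT gi fgi)) => x _.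
by rewrite /= -EFinD addrC subrK.
Qed.

Lemma le_Rintegral_ge0_integral {f} {F : T -> \bar R} : integrable f ->
  measurable_fun setT F -> (forall x, 0 <= F x)%E ->
  (forall x, (f x)%:E <= F x)%E -> ((\int[mu]_x f x)%:E <= \int[mu]_x F x)%E.
Proof.
move=> fi mF F_ge0 fF; rewrite fineK ?integrable_fin_num //.
have [Fi|Fni] := boolP (mu.-integrable setT F); first exact: le_integral.
suff -> : (\int[mu]_x F x = +oo)%E by rewrite leey.
apply/eqP; rewrite -leye_eq leNgt; apply: contra Fni => Fnoo.
apply/integrableP; split => //.
by under eq_integral do rewrite gee0_abs //.
Qed.

Lemma ae_eq_Rintegral_le {f g} : integrable f -> integrable g ->
  (forall x, f x <= g x) -> \int[mu]_x g x <= \int[mu]_x f x ->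
  ae_eq mu setT (EFin \o g) (EFin \o f).
Proof.
move=> fi gi fg int_gf.
have gfi := integrableBR gi fi.
have gf_ae0 : ae_eq mu setT (EFin \o (fun x => g x - f x)) (cst 0%E).
  apply/ae_eq_integral_abs => //; first by case/integrableP: gfi.
  rewrite (eq_integral (fun x => (g x - f x)%:E)) => [|x _]; last first.
    by rewrite /= ger0_norm // subr_ge0.
  apply/eqP; rewrite eq_le integral_ge0 => [|x _]; last by rewrite lee_fin subr_ge0.
  by rewrite -(fineK (integrable_fin_num measurableT gfi)) lee_fin -/(Rintegral _ _ _)
    andbT RintegralB // subr_le0.
apply: filterS gf_ae0 => x /= /(_ I) /eqP.
by rewrite eqe subr_eq0 => /eqP ->.
Qed.

Lemma integrable_ae_eq {f g} : measurable_fun setT f -> integrable g ->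
  ae_eq mu setT (EFin \o f) (EFin \o g) -> integrable f.
Proof.
move=> mf gi fg; have [mg _] := integrableP _ _ _ gi.
apply/integrableP; split; first exact/measurable_EFinP.
rewrite (ae_eq_integral (fun x => `|(g x)%:E|)%E) //.
- by case/integrableP: gi.
- by apply: measurableT_comp => //; exact/measurable_EFinP.
- exact: measurableT_comp.
- by apply: filterS fg => x /= fgx Tx; case: (fgx Tx) => ->.
Qed.

Lemma ae_eq_Rintegral {f g} : measurable_fun setT f -> measurable_fun setT g ->
  ae_eq mu setT (EFin \o f) (EFin \o g) -> \int[mu]_x f x = \int[mu]_x g x.
Proof.
move=> mf mg fg; rewrite /Rintegral (ae_eq_integral (EFin \o g)) //.
- exact/measurable_EFinP.
- exact/measurable_EFinP.
Qed.

End Rintegral_lemmas.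

Section distribution_lemmas.
Context {R : realType} {dO d : measure_display} {Om : measurableType dO}
  {TX : measurableType d} (P : probability Om R) (X : {mfun Om >-> TX}).
Local Notation mX := (measurable_funPT X).

Lemma integral_distribution_set (A : set TX) (f : TX -> \bar R) :
  measurable A -> measurable_fun setT f ->
  (\int[distribution P X]_(x in A) f x = \int[P]_(w in X @^-1` A) f (X w))%E.
Proof.
move=> mA mf; have mfA := measurable_funTS (D := A) mf.
have push (h : TX -> \bar R) : measurable_fun A h -> (forall y, 0 <= h y)%E ->
    (\int[distribution P X]_(x in A) h x = \int[P]_(w in X @^-1` A) (h \o X) w)%E.
  by move=> mh h_ge0; rewrite -(ge0_integral_pushforward mX).
rewrite integralE [RHS]integralE !push //.
- by rewrite -funepos_comp -funeneg_comp.
- exact: measurable_funeneg.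
- exact: measurable_funepos.
Qed.

(** The proof of [measurable E] is unused in the body; it is an argument so that
    the measure instances below can be declared on [restr_distribution mE]. *)
Definition restr_distribution {E : set Om} of measurable E : set TX -> \bar R :=
  fun A => P (X @^-1` A `&` E).

Section restr_distribution.
Variables (E : set Om) (mE : measurable E).
Local Notation nu := (restr_distribution mE).

Let nu0 : nu set0 = 0%E.
Proof. by rewrite /restr_distribution preimage_set0 set0I measure0. Qed.

Let nu_ge0 A : (0 <= nu A)%E.
Proof. exact: measure_ge0. Qed.

Let nu_sigma_additive : semi_sigma_additive nu.
Proof. exact: (@measure_semi_sigma_additive _ _ _ (pushforward (mrestr P mE) X)). Qed.

HB.instance Definition _ := isMeasure.Build _ _ _ nu nu0 nu_ge0 nu_sigma_additive.

Let nu_fin : fin_num_fun nu.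
Proof.
apply: lty_fin_num_fun; rewrite /restr_distribution.
apply: le_lt_trans (probability_le1 P _) (ltry _).
by apply: measurableI => //; rewrite -[X in measurable X]setTI; exact: mX.
Qed.

HB.instance Definition _ := Measure_isFinite.Build _ _ _ nu nu_fin.

Lemma ge0_integral_restr_distribution (f : TX -> \bar R) :
  measurable_fun setT f -> (forall x, 0 <= f x)%E ->
  (\int[nu]_x f x = \int[P]_(w in E) f (X w))%E.
Proof.
move=> mf f_ge0.
rewrite (eq_measure_integral (pushforward (mrestr P mE) X)) //.
rewrite ge0_integral_pushforward // preimage_setT.
have null_CE : mrestr P mE (~` E) = 0%E.
  by change (P (~` E `&` E) = 0%E); rewrite setICl measure0.
rewrite (ge0_negligible_integral (measurableC mE) _ _ _ null_CE) //; last 2 first.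
- exact: measurableT_comp.
- by move=> w _; exact: f_ge0.
rewrite setTD setCK; apply: eq_measure_integral => /= A mA AE.
by rewrite /mrestr setIidl.
Qed.

End restr_distribution.
End distribution_lemmas.

Section finite_sums.
Context {R : realFieldType} {I : finType}.
Implicit Types (A : {set I}) (a b : I -> R).

Lemma sum_in_deltaM {A k} b : k \in A -> \sum_(j in A) (j == k)%:R * b j = b k.
Proof.
move=> kA; rewrite (bigD1 k) //= eqxx mul1r big1 ?addr0 // => j /andP[_ /negbTE ->].
by rewrite mul0r.
Qed.

Lemma sum_in_delta {A k} : k \in A -> \sum_(j in A) (j == k)%:R = 1 :> R.
Proof.
move=> kA; rewrite -[RHS](sum_in_deltaM (fun=> 1) kA).
by apply: eq_bigr => j _; rewrite mulr1.
Qed.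

(** As [a] sums to zero, [b] may be centred at the midpoint of its range on
    [A]; each centred term is then at least [- alpha / 2 * |a k|]. *)
Lemma balanced_sum_mul_ge A a b (alpha : R) : \sum_(k in A) a k = 0 ->
  (forall k k', k \in A -> k' \in A -> `|b k - b k'| <= alpha) ->
  - (alpha / 2 * \sum_(k in A) `|a k|) <= \sum_(k in A) a k * b k.
Proof.
move=> a_sum0 b_close; have [k0 k0A|A0] := pickP (mem A); last first.
  by rewrite !big_pred0 // mulr0 oppr0.
have [kM kMA kM_max] := @arg_maxP _ R _ k0 (mem A) b k0A.
have [km kmA km_min] := @arg_minP _ R _ k0 (mem A) b k0A.
pose mid := (b kM + b km) / 2.
have -> : \sum_(k in A) a k * b k = \sum_(k in A) a k * (b k - mid).
  under [RHS]eq_bigr do rewrite mulrBr.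
  by rewrite sumrB -mulr_suml a_sum0 mul0r subr0.
rewrite mulr_sumr -sumrN; apply: ler_sum => k kA.
have b_mid : `|b k - mid| <= alpha / 2.
  have bk_le : b k <= b kM := kM_max k kA.
  have bk_ge : b km <= b k := km_min k kA.
  have := b_close _ _ kMA kmA; rewrite /mid !ler_norml => /andP[? ?].
  by apply/andP; split; lra.
rewrite lerNl (le_trans (ler_norm _)) // normrN normrM.
by rewrite [leLHS]mulrC; apply: ler_wpM2r.
Qed.

End finite_sums.

Section fair_classification.
Context {R : realType} {dO : measure_display} {Om : measurableType dO}
  (P : probability Om R) {d : measure_display} {TX : measurableType d}
  (X : {mfun Om >-> TX}) {n K C : nat} (E : 'I_K -> set Om)
  (r : TX -> 'I_n.+1 -> R) (g : TX -> 'I_K -> R)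
  (yc : 'I_C -> 'I_n.+1) (Ic : 'I_C -> {set 'I_K}) (alpha : R)
  (phi : TX -> R) (psi : 'I_C -> 'I_K -> R).
Hypotheses (mE : forall k, measurable (E k)) (PE_gt0 : forall k, (0 < P (E k))%E).
Hypotheses (r_ge0 : forall x y, 0 <= r x y)
  (mr : forall y, measurable_fun setT (r ^~ y)).
Hypothesis g_cond : is_cond_prob P X E g.
Hypothesis alpha_ge0 : 0 <= alpha.
Hypothesis unique_min : uniqueness_assumption r g (distribution P X).
Hypothesis dual_opt : dual_maximizer r g (distribution P X) yc Ic alpha phi psi.

Local Notation mu := (distribution P X).
Local Notation integrable f := (mu.-integrable setT (EFin \o f)).
Implicit Types (q : TX -> 'I_n.+1 -> R) (de : 'I_C -> 'I_K -> R).

Definition prob_group k := fine (P (E k)).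

Lemma prob_groupE k : P (E k) = (prob_group k)%:E.
Proof.
rewrite /prob_group fineK // ge0_fin_numE //.
exact: le_lt_trans (probability_le1 P (mE k)) (ltry _).
Qed.

Lemma prob_group_gt0 k : 0 < prob_group k.
Proof. by rewrite -lte_fin -prob_groupE. Qed.

Lemma measurable_g k : measurable_fun setT (g ^~ k).
Proof. exact: (g_cond k).1. Qed.

Lemma integral_g_set k A : measurable A ->
  (\int[mu]_(x in A) (g x k)%:E = P (X @^-1` A `&` E k))%E.
Proof.
move=> mA; rewrite integral_distribution_set //; first exact: (g_cond k).2.
exact/measurable_EFinP/measurable_g.
Qed.

Lemma integrable_g k : integrable (g ^~ k).
Proof.
apply/integrableP; split; first exact/measurable_EFinP/measurable_g.
apply/abse_integralP => //; first exact/measurable_EFinP/measurable_g.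
by rewrite integral_g_set // preimage_setT setTI prob_groupE ltry.
Qed.

Lemma expect_g k : expect mu (g ^~ k) = prob_group k.
Proof. by rewrite /expect integral_g_set // preimage_setT setTI. Qed.

(** [is_cond_prob] only integrates [g] against indicators of events [X @^-1` A];
    identifying [g x k] with a Radon-Nikodym derivative extends this to bounded
    measurable functions of [X]. *)
Lemma integral_mul_g (Q : TX -> R) k : measurable_fun setT Q ->
  (forall x, 0 <= Q x <= 1) ->
  (\int[mu]_x (Q x * g x k)%:E = \int[P]_(w in E k) (Q (X w))%:E)%E.
Proof.
move=> mQ Q01.
pose nu : {finite_measure set TX -> \bar R} := restr_distribution P X (mE k).
have nu_mu : nu `<< mu.
  move=> N mu_N A mA AN; apply/eqP; rewrite eq_le measure_ge0 andbT.
  have mXA : measurable (X @^-1` A).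
    by rewrite -[X in measurable X]setTI; exact: measurable_funPT.
  rewrite -(mu_N A mA AN); apply: le_measure; rewrite ?inE //.
  exact: measurableI.
pose rn := Radon_Nikodym (charge_of_finite_measure nu) mu.
have rn_int : mu.-integrable setT rn :=
  @Radon_Nikodym_integrable _ _ _ (charge_of_finite_measure nu) mu nu_mu.
have rn_g : ae_eq mu setT rn (EFin \o g ^~ k).
  apply: integral_ae_eq => //; first exact/measurable_EFinP/measurable_g.
  move=> A _ mA.
  rewrite -(@Radon_Nikodym_integral _ _ _ (charge_of_finite_measure nu)) //.
  by rewrite integral_g_set.
transitivity (\int[mu]_x ((Q x)%:E * rn x))%E.
  apply: ae_eq_integral => //.
  - by apply/measurable_EFinP/measurable_funM => //; exact: measurable_g.
  - by apply: emeasurable_funM; [exact/measurable_EFinP | exact: measurable_int rn_int].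
  - apply: filterS (ae_eqe_mul2l (EFin \o Q) (ae_eq_sym rn_g)) => x /= rn_gx Tx.
    by rewrite EFinM rn_gx.
rewrite Radon_Nikodym_change_of_variables //.
- rewrite ge0_integral_restr_distribution //; first exact/measurable_EFinP.
  by move=> x; rewrite lee_fin; case/andP: (Q01 x).
- apply: (le_integrable measurableT _ _ (finite_measure_integrable_cst nu 1 measurableT)).
    exact/measurable_EFinP.
  by move=> x _ /=; rewrite lee_fin normr1 ger0_norm; case/andP: (Q01 x).
Qed.

Lemma integrable_mul_g (Q : TX -> R) k : measurable_fun setT Q ->
  (forall x, 0 <= Q x <= 1) -> integrable (fun x => Q x * g x k).
Proof.
move=> mQ Q01; apply: (le_integrable measurableT _ _ (integrable_g k)).
  by apply/measurable_EFinP/measurable_funM => //; exact: measurable_g.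
move=> x _ /=; rewrite lee_fin normrM.
by case/andP: (Q01 x) => Q_ge0 Q_le1; rewrite ler_piMl // ger0_norm.
Qed.

Lemma rand_classifier01 {q} : rand_classifier q -> forall x y, 0 <= q x y <= 1.
Proof.
case=> q_ge0 q_sum1 _ x y; rewrite q_ge0 -(q_sum1 x) (bigD1 y) //= lerDl.
exact: sumr_ge0.
Qed.

Lemma Rintegral_mul_g q y k : rand_classifier q ->
  \int[mu]_x (q x y * g x k) = cond_pred P X E q y k * prob_group k.
Proof.
move=> q_rand; have [_ _ mq] := q_rand.
rewrite /Rintegral (integral_mul_g _ k (mq y) (fun x => rand_classifier01 q_rand x y)).
by rewrite /cond_pred -/(prob_group k) divfK // gt_eqF // prob_group_gt0.
Qed.

(** [lagrange_term psi x y] is [- \sum_k g x k * w y k] for the weights [w] of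
    the theorem, and [lagrange_weight psi] is [- w]. *)
Definition lagrange_term de x y :=
  \sum_(c < C | yc c == y) \sum_(k in Ic c) g x k * de c k / prob_group k.

Definition lagrange_weight de y k :=
  \sum_(c < C | (yc c == y) && (k \in Ic c)) de c k / prob_group k.

Lemma lagrange_termE de x y :
  lagrange_term de x y = \sum_(k < K) g x k * lagrange_weight de y k.
Proof.
rewrite /lagrange_term /lagrange_weight.
transitivity (\sum_(c < C) \sum_(k < K)
   (if (yc c == y) && (k \in Ic c) then g x k * de c k / prob_group k else 0)).
  rewrite big_mkcond; apply: eq_bigr => c _.
  by case: (yc c == y); [rewrite big_mkcond | rewrite big1].
rewrite exchange_big; apply: eq_bigr => k _.
rewrite mulr_sumr [RHS]big_mkcond; apply: eq_bigr => c _.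
by case: ifP; rewrite ?mulr0 // mulrA.
Qed.

Lemma lagrange_termD de1 de2 (t : R) x y :
  lagrange_term (fun c k => de1 c k + t * de2 c k) x y =
  lagrange_term de1 x y + t * lagrange_term de2 x y.
Proof.
rewrite /lagrange_term mulr_sumr -big_split; apply: eq_bigr => c _.
rewrite mulr_sumr -big_split; apply: eq_bigr => k _ /=.
by rewrite mulrDr mulrDl mulrCA !mulrA.
Qed.

Lemma measurable_lagrange_term de y :
  measurable_fun setT (lagrange_term de ^~ y).
Proof.
under eq_fun do rewrite lagrange_termE.
by apply: measurable_sum => k; apply: measurable_funM => //; exact: measurable_g.
Qed.

Lemma integrable_lagrange_term de y : integrable (lagrange_term de ^~ y).
Proof.
under eq_fun do rewrite lagrange_termE.
apply: integrable_sumR => k; under eq_fun do rewrite mulrC.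
exact/integrableZR/integrable_g.
Qed.

Lemma lagrange_term_classifier q de x :
  \sum_(y < n.+1) q x y * lagrange_term de x y =
  \sum_(c < C) \sum_(k in Ic c) de c k / prob_group k * (q x (yc c) * g x k).
Proof.
rewrite /lagrange_term; under eq_bigr do rewrite mulr_sumr.
rewrite (exchange_big_dep xpredT) //=; apply: eq_bigr => c _.
rewrite (big_pred1 (yc c)) => [|y]; last by rewrite /= eq_sym.
by rewrite mulr_sumr; apply: eq_bigr => k _; ring.
Qed.

Lemma integrable_lagrange_term_classifier q de : rand_classifier q ->
  integrable (fun x => \sum_(y < n.+1) q x y * lagrange_term de x y).
Proof.
move=> q_rand; have [_ _ mq] := q_rand.
under eq_fun do rewrite lagrange_term_classifier.
apply: integrable_sumR => c; apply: integrable_sumR => k.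
by apply/integrableZR/integrable_mul_g => [|x]; [exact: mq | exact: rand_classifier01].
Qed.

Lemma Rintegral_lagrange_term_classifier q de : rand_classifier q ->
  \int[mu]_x (\sum_(y < n.+1) q x y * lagrange_term de x y) =
  \sum_(c < C) \sum_(k in Ic c) de c k * cond_pred P X E q (yc c) k.
Proof.
move=> q_rand; have [_ _ mq] := q_rand.
have int_qg c k : integrable (fun x => q x (yc c) * g x k).
  by apply: integrable_mul_g => [|x]; [exact: mq | exact: rand_classifier01].
under eq_Rintegral do rewrite lagrange_term_classifier.
rewrite Rintegral_sum => [|c]; last first.
  by apply: integrable_sumR => k; exact: integrableZR.
apply: eq_bigr => c _; rewrite Rintegral_sum => [|k]; last exact: integrableZR.
apply: eq_bigr => k _; rewrite RintegralZl // Rintegral_mul_g //.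
by rewrite mulrAC mulrA mulfK // gt_eqF // prob_group_gt0.
Qed.

Definition norm1 de := \sum_(c < C) \sum_(k in Ic c) `|de c k|.

Lemma dual_feasibleP phi' psi' : dual_feasible r g mu yc Ic phi' psi' <->
  [/\ integrable phi', forall x y, phi' x + lagrange_term psi' x y <= r x y
    & forall c, \sum_(k in Ic c) psi' c k = 0].
Proof.
have expectE x y : \sum_(c < C | yc c == y) \sum_(k in Ic c)
    g x k * psi' c k / expect mu (g ^~ k) = lagrange_term psi' x y.
  by apply: eq_bigr => c _; apply: eq_bigr => k _; rewrite expect_g.
by split=> -[phi_int feas rows]; split=> // x y; move: (feas x y); rewrite expectE.
Qed.

Lemma dual_obj_le {phi' psi'} : dual_feasible r g mu yc Ic phi' psi' ->
  \int[mu]_x phi' x - alpha / 2 * norm1 psi' <=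
  \int[mu]_x phi x - alpha / 2 * norm1 psi.
Proof. exact: dual_opt.2. Qed.

Lemma integrable_phi : integrable phi.
Proof. by have [/dual_feasibleP[]] := dual_opt. Qed.

Lemma measurable_phi : measurable_fun setT phi.
Proof. by case/integrableP: integrable_phi => /measurable_EFinP. Qed.

Lemma psi_rows c : \sum_(k in Ic c) psi c k = 0.
Proof. by have [/dual_feasibleP[]] := dual_opt. Qed.

Definition lagrangian x y := r x y - lagrange_term psi x y.

Definition h_opt x := argmin_first (lagrangian x).

Definition phi_min x := lagrangian x (h_opt x).

Lemma measurable_lagrangian y : measurable_fun setT (lagrangian ^~ y).
Proof. exact: measurable_funB (mr y) (measurable_lagrange_term psi y). Qed.

Lemma phi_le_lagrangian x y : phi x <= lagrangian x y.
Proof.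
have [/dual_feasibleP[_ feas _] _] := dual_opt.
by rewrite /lagrangian lerBrDr feas.
Qed.

Lemma phi_min_le x y : phi_min x <= lagrangian x y.
Proof. exact: argmin_firstP. Qed.

Lemma measurable_phi_min : measurable_fun setT phi_min.
Proof.
exact: measurable_fun_argmin_first_app measurable_lagrangian _ measurable_lagrangian.
Qed.

(** [phi_min], truncated at [phi + 1] to make it integrable, is a feasible dual
    variable above [phi]; optimality of [phi] forces equality a.e. *)
Lemma phi_min_ae : ae_eq mu setT (EFin \o phi_min) (EFin \o phi).
Proof.
pose phi1 x := Num.min (phi_min x) (phi x + 1).
have phi1_phi x : 0 <= phi1 x - phi x <= 1.
  rewrite subr_ge0 le_min phi_le_lagrangian lerDl ler01 /= lerBlDl ge_min.
  by rewrite addrC lexx orbT.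
have mphi1 : measurable_fun setT phi1.
  apply: measurable_minr measurable_phi_min _.
  exact: measurable_funD measurable_phi (measurable_cst _).
have int_phi1 : integrable phi1.
  apply: integrable_close mphi1 integrable_phi
    (finite_measure_integrable_cst mu 1 measurableT) _ => x.
  by have /andP[? ?] := phi1_phi x; rewrite ger0_norm.
have feas1 : dual_feasible r g mu yc Ic phi1 psi.
  apply/dual_feasibleP; split => // [x y|]; last exact: psi_rows.
  have := phi_min_le x y; have : phi1 x <= phi_min x by rewrite ge_min lexx.
  rewrite /lagrangian; lra.
have phi1_ae : ae_eq mu setT (EFin \o phi1) (EFin \o phi).
  apply: ae_eq_Rintegral_le integrable_phi int_phi1 _ _ => [x|].
    by have := phi1_phi x; rewrite subr_ge0 => /andP[].
  by have := dual_obj_le feas1; lra.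
apply: filterS phi1_ae => x /= /(_ I) [phi1_eq] _; congr EFin.
move: phi1_eq; rewrite /phi1; case: leP => // _; lra.
Qed.

Lemma integrable_phi_min : integrable phi_min.
Proof. exact: integrable_ae_eq measurable_phi_min integrable_phi phi_min_ae. Qed.

Lemma Rintegral_phi_min : \int[mu]_x phi_min x = \int[mu]_x phi x.
Proof. exact: ae_eq_Rintegral measurable_phi_min measurable_phi phi_min_ae. Qed.

Local Notation h_rand := (det_classifier R h_opt).

Lemma rand_classifier_h_opt : rand_classifier h_rand.
Proof.
split => [x y|x|y].
- by rewrite /det_classifier; case: ifP.
- rewrite -[RHS](sum_det_classifierM h_opt x (fun=> 1)).
  by apply: eq_bigr => y _; rewrite mulr1.
- exact: measurable_det_classifier_argmin_first measurable_lagrangian y.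
Qed.

Lemma lagrange_term_h_opt de x :
  lagrange_term de x (h_opt x) = \sum_(y < n.+1) h_rand x y * lagrange_term de x y.
Proof. by rewrite sum_det_classifierM. Qed.

Lemma integrable_lagrange_term_h_opt de :
  integrable (fun x => lagrange_term de x (h_opt x)).
Proof.
under eq_fun do rewrite lagrange_term_h_opt.
exact: integrable_lagrange_term_classifier rand_classifier_h_opt.
Qed.

Lemma Rintegral_lagrange_term_h_opt de :
  \int[mu]_x lagrange_term de x (h_opt x) =
  \sum_(c < C) \sum_(k in Ic c) de c k * cond_pred P X E h_rand (yc c) k.
Proof.
under eq_Rintegral do rewrite lagrange_term_h_opt.
exact: Rintegral_lagrange_term_classifier rand_classifier_h_opt.
Qed.

Section perturbation.
Variable de : 'I_C -> 'I_K -> R.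
Hypothesis de_rows : forall c, \sum_(k in Ic c) de c k = 0.

Let lagrangian_t t x y := lagrangian x y - t * lagrange_term de x y.

Let phi_t t x := lagrangian_t t x (argmin_first (lagrangian_t t x)).

Let bound x := \sum_(y < n.+1) `|lagrange_term de x y|.

Let phi_t_le t x y : phi_t t x <= lagrangian_t t x y.
Proof. exact: argmin_firstP. Qed.

Let measurable_lagrangian_t t y : measurable_fun setT (lagrangian_t t ^~ y).
Proof.
apply: measurable_funB (measurable_lagrangian y) _.
exact: measurable_funM (measurable_lagrange_term de y).
Qed.

Let measurable_phi_t t : measurable_fun setT (phi_t t).
Proof.
exact: measurable_fun_argmin_first_app (measurable_lagrangian_t t) _
  (measurable_lagrangian_t t).
Qed.

Let integrable_bound : integrable bound.
Proof.
apply: integrable_sumR => y; exact: integrable_norm (integrable_lagrange_term de y).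
Qed.

Let lagrange_term_le_bound x y : `|lagrange_term de x y| <= bound x.
Proof. by rewrite /bound (bigD1 y) //= lerDl sumr_ge0. Qed.

Let phi_t_dist t x : 0 <= t -> `|phi_t t x - phi_min x| <= t * bound x.
Proof.
move=> t_ge0; rewrite ler_norml; apply/andP; split.
- have := phi_min_le x (argmin_first (lagrangian_t t x)).
  have : t * lagrange_term de x (argmin_first (lagrangian_t t x)) <= t * bound x.
    by rewrite ler_wpM2l // (le_trans (ler_norm _) (lagrange_term_le_bound _ _)).
  rewrite /phi_t /lagrangian_t; lra.
- have := phi_t_le t x (h_opt x).
  have : - (t * lagrange_term de x (h_opt x)) <= t * bound x.
    rewrite -mulrN ler_wpM2l // (le_trans (ler_norm _)) // normrN.
    exact: lagrange_term_le_bound.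
  rewrite /lagrangian_t -/(phi_min x); lra.
Qed.

Let integrable_phi_t t : 0 <= t -> integrable (phi_t t).
Proof.
move=> t_ge0; apply: integrable_close (measurable_phi_t t) integrable_phi_min
  (integrableZR t integrable_bound) _ => x.
exact: phi_t_dist.
Qed.

Let dual_feasible_t t : 0 <= t ->
  dual_feasible r g mu yc Ic (phi_t t) (fun c k => psi c k + t * de c k).
Proof.
move=> t_ge0; apply/dual_feasibleP; split; first exact: integrable_phi_t.
- move=> x y; have := phi_t_le t x y.
  by rewrite lagrange_termD /lagrangian_t /lagrangian; lra.
- by move=> c; rewrite big_split /= -mulr_sumr de_rows psi_rows mulr0 addr0.
Qed.

Let difference_quotient_le t : 0 < t ->
  \int[mu]_x ((phi_t t x - phi_min x) / t) <=
  alpha / 2 * ((norm1 (fun c k => psi c k + t * de c k) - norm1 psi) / t).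
Proof.
move=> t_gt0; have t_ge0 := ltW t_gt0.
under eq_Rintegral do rewrite mulrC.
rewrite RintegralZl //; last first.
  exact: integrableBR (integrable_phi_t _ t_ge0) integrable_phi_min.
rewrite RintegralB //; [|exact: integrable_phi_t | exact: integrable_phi_min].
rewrite [X in _ <= X]mulrA [X in _ <= X]mulrC ler_wpM2l ?invr_ge0 //.
by rewrite Rintegral_phi_min; have := dual_obj_le (dual_feasible_t _ t_ge0); lra.
Qed.

(** Uniqueness of the minimiser is what makes the perturbed minimiser equal
    to [h_opt x] for small [t], hence [phi_t] affine in [t] near [0]. *)
Let phi_t_near0 : {ae mu, forall x, \forall t \near (0 : R),
  phi_t t x = phi_min x - t * lagrange_term de x (h_opt x)}.
Proof.
apply: filterS (unique_min (lagrange_weight psi)) => x [y0 [y0_min y0_uniq]].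
have lagrangianE : (fun y => r x y - \sum_(k < K) g x k * lagrange_weight psi y k) =
    lagrangian x by apply: funext => y; rewrite /lagrangian lagrange_termE.
rewrite lagrangianE in y0_min y0_uniq.
have y0_strict := unique_argmin_strict y0_min y0_uniq.
have h_y0 : h_opt x = y0 by apply: argmin_first_strict.
apply: filterS (near0_argmin_first_perturb (lagrange_term de x) y0_strict).
by move=> t ht; rewrite /phi_t ht /phi_min h_y0.
Qed.

Let quotient m x := (phi_t (harmonic m) x - phi_min x) / harmonic m.

Let integrable_quotient m : integrable (quotient m).
Proof.
rewrite /quotient; under eq_fun do rewrite mulrC.
apply: integrableZR.
exact: integrableBR (integrable_phi_t _ (harmonic_ge0 m)) integrable_phi_min.
Qed.

Let quotient_cvg : (\int[mu]_x (quotient m x)%:E)%E @[m --> \oo] -->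
  (- \int[mu]_x lagrange_term de x (h_opt x))%:E.
Proof.
have mq m : measurable_fun setT (fun x => (quotient m x)%:E).
  apply/measurable_EFinP/measurable_funM => //.
  exact: measurable_funB (measurable_phi_t _) measurable_phi_min.
have mS : measurable_fun setT (fun x => (- lagrange_term de x (h_opt x))%:E).
  apply/measurable_EFinP/measurable_funN.
  exact: measurable_fun_argmin_first_app measurable_lagrangian _
    (measurable_lagrange_term de).
have q_cvg : {ae mu, forall x, setT x ->
    (quotient m x)%:E @[m --> \oo] --> (- lagrange_term de x (h_opt x))%:E}.
  apply: filterS phi_t_near0 => x phi_tE _; apply: cvg_near_cst.
  have : \forall m \near \oo, phi_t (harmonic m) x =
      phi_min x - harmonic m * lagrange_term de x (h_opt x).
    exact: cvg_harmonic _ phi_tE.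
  apply: filterS => m; rewrite /quotient => ->.
  by rewrite addrC addKr mulNr mulrC mulKf // lt0r_neq0 // harmonic_gt0.
have q_bound : {ae mu, forall x m, setT x -> (`|(quotient m x)%:E| <= (bound x)%:E)%E}.
  apply: aeW => x m _; rewrite lee_fin normrM normfV ler_pdivrMr; last first.
    by rewrite normr_gt0 lt0r_neq0 // harmonic_gt0.
  by rewrite (ger0_norm (harmonic_ge0 m)) mulrC phi_t_dist ?harmonic_ge0.
have [_ _ int_cvg] :=
  dominated_convergence measurableT mq mS q_cvg integrable_bound q_bound.
suff <- : (\int[mu]_x (- lagrange_term de x (h_opt x))%:E)%E =
    (- \int[mu]_x lagrange_term de x (h_opt x))%:E by [].
have int_S := integrable_lagrange_term_h_opt de.
rewrite -mulN1r -RintegralZl // /Rintegral fineK.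
  by apply: eq_integral => x _; rewrite mulN1r.
exact: integrable_fin_num (integrableZR (-1) int_S).
Qed.

Lemma directional_bound (D : R) :
  (forall t, 0 < t <= 1 ->
    norm1 (fun c k => psi c k + t * de c k) <= norm1 psi + t * D) ->
  - \sum_(c < C) \sum_(k in Ic c) de c k * cond_pred P X E h_rand (yc c) k <=
  alpha / 2 * D.
Proof.
move=> norm1_dir; rewrite -Rintegral_lagrange_term_h_opt -lee_fin.
rewrite -(cvg_lim (@ereal_hausdorff R) quotient_cvg).
apply: lime_le; first exact: cvgP quotient_cvg.
apply: nearW => m; have m_gt0 : 0 < harmonic m :> R := harmonic_gt0 m.
have := integrable_fin_num measurableT (integrable_quotient m).
move=> /fineK <-.
rewrite lee_fin; apply: le_trans (difference_quotient_le _ m_gt0) _.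
rewrite ler_wpM2l ?divr_ge0 // ler_pdivrMr // mulrC lerBlDl.
by apply: norm1_dir; rewrite m_gt0 invf_le1 ?ler1n.
Qed.

End perturbation.

Lemma norm1_triangle de t : 0 <= t ->
  norm1 (fun c k => psi c k + t * de c k) <= norm1 psi + t * norm1 de.
Proof.
move=> t_ge0; rewrite /norm1 mulr_sumr -big_split /=; apply: ler_sum => c _.
rewrite mulr_sumr -big_split /=; apply: ler_sum => k _.
by rewrite (le_trans (ler_normD _ _)) // normrM ger0_norm.
Qed.

Lemma group_fair_h_opt : group_fair P X E yc Ic alpha h_rand.
Proof.
have diff_le c k k' : k \in Ic c -> k' \in Ic c ->
    cond_pred P X E h_rand (yc c) k' - cond_pred P X E h_rand (yc c) k <= alpha.
  move=> kc k'c.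
  pose de c' j : R := if c' == c then (j == k)%:R - (j == k')%:R else 0.
  have row_c (F : 'I_C -> R) : (forall c', c' != c -> F c' = 0) ->
      \sum_(c' < C) F c' = F c.
    by move=> F0; rewrite (bigD1 c) //= big1 ?addr0.
  have de_rows c' : \sum_(j in Ic c') de c' j = 0.
    rewrite /de; case: eqP => [->|_]; last by rewrite big1.
    by rewrite sumrB !sum_in_delta // subrr.
  have norm1_de : norm1 de <= 2.
    rewrite /norm1 row_c => [|c' c'Nc]; last first.
      by rewrite big1 // => j _; rewrite /de (negbTE c'Nc) normr0.
    rewrite /de eqxx.
    apply: (@le_trans _ _ (\sum_(j in Ic c) ((j == k)%:R + (j == k')%:R))).
      by apply: ler_sum => j _; rewrite (le_trans (ler_normB _ _)) // !ger0_norm.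
    by rewrite big_split /= !sum_in_delta.
  have := directional_bound _ de_rows _
    (fun t t01 => norm1_triangle de t (ltW (andP t01).1)).
  rewrite row_c => [|c' c'Nc]; last first.
    by rewrite big1 // => j _; rewrite /de (negbTE c'Nc) mul0r.
  rewrite /de eqxx; under eq_bigr do rewrite mulrBl.
  rewrite sumrB !sum_in_deltaM // opprB => fair_le.
  have half_ge0 : 0 <= alpha / 2 by rewrite divr_ge0.
  by have := ler_wpM2l half_ge0 norm1_de; lra.
by move=> c k k' kc k'c; rewrite ler_norml lerNl opprB !diff_le.
Qed.

Lemma risk_distribution q : rand_classifier q ->
  risk P X r q = (\int[mu]_x (\sum_(y < n.+1) q x y * r x y)%:E)%E.
Proof.
case=> _ _ mq; rewrite /risk (integral_distribution_set P X _ _ measurableT).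
  by rewrite preimage_setT.
by apply/measurable_EFinP/measurable_sum => y; exact: measurable_funM.
Qed.

Lemma fair_lagrange_ge {q} : group_fair P X E yc Ic alpha q ->
  - (alpha / 2 * norm1 psi) <=
  \sum_(c < C) \sum_(k in Ic c) psi c k * cond_pred P X E q (yc c) k.
Proof.
move=> q_fair; rewrite /norm1 mulr_sumr -sumrN; apply: ler_sum => c _.
exact: balanced_sum_mul_ge (psi_rows c) (q_fair c).
Qed.

Lemma weak_duality {q} : rand_classifier q -> group_fair P X E yc Ic alpha q ->
  ((\int[mu]_x phi x - alpha / 2 * norm1 psi)%:E <= risk P X r q)%E.
Proof.
move=> q_rand q_fair; have [q_ge0 q_sum1 mq] := q_rand.
pose lower x := phi x + \sum_(y < n.+1) q x y * lagrange_term psi x y.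
have int_lagr := integrable_lagrange_term_classifier _ psi q_rand.
have lower_le x : ((lower x)%:E <= (\sum_(y < n.+1) q x y * r x y)%:E)%E.
  rewrite lee_fin /lower -[phi x]mul1r -(q_sum1 x) mulr_suml -big_split /=.
  apply: ler_sum => y _; rewrite -mulrDr ler_wpM2l //.
  by have := phi_le_lagrangian x y; rewrite /lagrangian; lra.
rewrite risk_distribution //.
apply: (le_trans _ (le_Rintegral_ge0_integral
  (integrableDR integrable_phi int_lagr) _ _ lower_le)).
- rewrite lee_fin RintegralD //; last exact: integrable_phi.
  by rewrite Rintegral_lagrange_term_classifier //; have := fair_lagrange_ge q_fair; lra.
- by apply/measurable_EFinP/measurable_sum => y; exact: measurable_funM.
- by move=> x; rewrite lee_fin sumr_ge0 // => y _; rewrite mulr_ge0.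
Qed.

Lemma risk_h_opt : risk P X r h_rand = (\int[mu]_x phi x +
  \sum_(c < C) \sum_(k in Ic c) psi c k * cond_pred P X E h_rand (yc c) k)%:E.
Proof.
have int_S := integrable_lagrange_term_h_opt psi.
rewrite risk_distribution; last exact: rand_classifier_h_opt.
rewrite -Rintegral_phi_min -Rintegral_lagrange_term_h_opt -RintegralD //;
  last exact: integrable_phi_min.
rewrite /Rintegral fineK; last first.
  exact: integrable_fin_num (integrableDR integrable_phi_min int_S).
by apply: eq_integral => x _; rewrite sum_det_classifierM /phi_min /lagrangian subrK.
Qed.

Lemma lagrange_term_h_opt_le :
  \sum_(c < C) \sum_(k in Ic c) psi c k * cond_pred P X E h_rand (yc c) k <=
  - (alpha / 2 * norm1 psi).
Proof.
have rows c : \sum_(k in Ic c) - psi c k = 0 by rewrite sumrN psi_rows oppr0.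
have shrink t : 0 < t <= 1 ->
    norm1 (fun c k => psi c k + t * - psi c k) <= norm1 psi + t * - norm1 psi.
  case/andP => _ t_le1.
  suff -> : norm1 (fun c k => psi c k + t * - psi c k) = (1 - t) * norm1 psi.
    by rewrite mulrBl mul1r mulrN lexx.
  rewrite /norm1 mulr_sumr; apply: eq_bigr => c _; rewrite mulr_sumr.
  apply: eq_bigr => k _; rewrite mulrN -{1}[psi c k]mul1r -mulrBl normrM.
  by rewrite ger0_norm // subr_ge0.
have := directional_bound _ rows _ shrink.
under eq_bigr do under eq_bigr do rewrite mulNr.
by under eq_bigr do rewrite sumrN; rewrite sumrN opprK mulrN.
Qed.

Lemma risk_h_opt_le q : rand_classifier q -> group_fair P X E yc Ic alpha q ->
  (risk P X r h_rand <= risk P X r q)%E.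
Proof.
move=> q_rand q_fair; apply: le_trans (weak_duality q_rand q_fair).
by rewrite risk_h_opt lee_fin; have := lagrange_term_h_opt_le; lra.
Qed.

Lemma h_optE x : argmin_first (fun y => r x y + \sum_(k < K) g x k *
    - \sum_(c < C | (yc c == y) && (k \in Ic c)) psi c k / fine (P (E k))) =
  h_opt x.
Proof.
congr argmin_first; apply: funext => y; rewrite /lagrangian lagrange_termE.
by rewrite -sumrN; congr (_ + _); apply: eq_bigr => k _; rewrite mulrN.
Qed.

End fair_classification.

Theorem theorem1 (R : realType) (dO : measure_display) (Om : measurableType dO)
  (P : probability Om R) (d : measure_display) (TX : measurableType d)
  (X : {mfun Om >-> TX}) (n K C : nat) (E : 'I_K -> set Om)
  (r : TX -> 'I_n.+1 -> R) (g : TX -> 'I_K -> R)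
  (yc : 'I_C -> 'I_n.+1) (Ic : 'I_C -> {set 'I_K}) (alpha : R)
  (phi : TX -> R) (psi : 'I_C -> 'I_K -> R) :
  (forall k, measurable (E k)) ->
  (forall k, (0 < P (E k))%E) ->
  (forall x y, 0 <= r x y) ->
  (forall y, measurable_fun setT (fun x => r x y)) ->
  is_cond_prob P X E g ->
  0 <= alpha <= 1 ->
  uniqueness_assumption r g (distribution P X) ->
  dual_maximizer r g (distribution P X) yc Ic alpha phi psi ->
  let w := fun (y : 'I_n.+1) (k : 'I_K) =>
    - \sum_(c < C | (yc c == y) && (k \in Ic c)) psi c k / fine (P (E k)) in
  let h := fun x => argmin_first (fun y => r x y + \sum_(k < K) g x k * w y k) in
  [/\ rand_classifier (det_classifier R h),
      group_fair P X E yc Ic alpha (det_classifier R h)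
    & forall q : TX -> 'I_n.+1 -> R, rand_classifier q ->
        group_fair P X E yc Ic alpha q ->
        (risk P X r (det_classifier R h) <= risk P X r q)%E].
Proof.
move=> mE PE_gt0 r_ge0 mr g_cond /andP[alpha_ge0 _] unique_min dual_opt w h.
have -> : h = h_opt P E r g yc Ic psi by apply: funext => x; exact: h_optE.
by split; [apply: rand_classifier_h_opt | apply: group_fair_h_opt | apply: risk_h_opt_le];
  eassumption.
Qed.
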